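(* Let $\Delta\geq2$ be an integer and $n\geq2\Delta^4$, and let $G$ be a graph on $n$ vertices with $\Delta(G)\leq\Delta$. Then there exists a graph $\bar G$ with $V(\bar G)=V(G)$ and $E(\bar G)\supseteq E(G)$ such that $d_{\bar G}(v)\in\{\Delta,\Delta+1\}$ for every vertex $v$ and $\Delta_2(\bar G)\leq\max\{\Delta_2(G),1\}$.
   Context: $\Delta(G)$ is the maximum degree; $\Delta_2(G)$ is the maximum over distinct vertex pairs of the number of common neighbours. *)

From mathcomp Require Import all_boot all_order.
Set Implicit Arguments. Unset Strict Implicit. Unset Printing Implicit Defensive.

Definition simple_graph (T : finType) (e : rel T) : Prop :=
  symmetric e /\ irreflexive e.

Definition deg (T : finType) (e : rel T) (v : T) : nat := #|[set u | e v u]|.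

Definition codeg (T : finType) (e : rel T) (x y : T) : nat :=
  #|[set w | e x w && e y w]|.

Definition maxdeg (T : finType) (e : rel T) : nat := \max_(v : T) deg e v.

Definition maxcodeg (T : finType) (e : rel T) : nat :=
  \max_(p : T * T | p.1 != p.2) codeg e p.1 p.2.

Definition subgraph_edges (T : finType) (e e' : rel T) : Prop :=
  forall x y, e x y -> e' x y.

From mathcomp Require Import all_boot all_order.
From mathcomp Require Import zify.
Set Implicit Arguments. Unset Strict Implicit. Unset Printing Implicit Defensive.

(* Greedy completion.  While some vertex v has degree below D, join it to a
   vertex u of degree at most D that is not blocked for v, i.e. neither v nor
   reachable from v by a walk of length 3.  Such an edge lies on no 4-cycle,
   so a pair of vertices gaining a common neighbour through it has no other
   one, and the codegree bound max(Delta_2, 1) survives.  Each edge lowers the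
   total deficit sum_z (D - deg z).  A vertex is pushed to degree D + 1 only
   when every deficient vertex is blocked for v, so at that moment the deficit
   is at most D * B, where B = 1 + (D-1)(D+1)^2 bounds the blocked set; from
   then on the number of vertices of degree D + 1 plus the deficit never
   increases.  Hence fewer than D * B vertices reach degree D + 1, and an
   admissible u exists as long as n >= (D + 1) * B, which n >= 2 D^4 ensures. *)

Lemma leq_card_bigcup (I T : finType) (P : pred I) (F : I -> {set T}) :
  #|\bigcup_(i | P i) F i| <= \sum_(i | P i) #|F i|.
Proof.
elim/big_ind2: _ => [|m A n B le_Am le_Bn|//]; first by rewrite cards0.
have [le_AB _] := leq_card_setU A B.
by apply: leq_trans le_AB _; apply: leq_add.
Qed.

Section AddEdge.

Variable T : finType.
Implicit Types (e : rel T) (u v w x y z : T).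

Definition add_edge e u v : rel T :=
  fun x y => [|| e x y, (x == u) && (y == v) | (x == v) && (y == u)].

Lemma add_edgeC e u v : add_edge e u v =2 add_edge e v u.
Proof. by move=> x y; rewrite /add_edge; congr (_ || _); apply: orbC. Qed.

Lemma subgraph_add_edge e u v : subgraph_edges e (add_edge e u v).
Proof. by move=> x y exy; rewrite /add_edge exy. Qed.

Lemma add_edge_simple e u v :
  simple_graph e -> u != v -> simple_graph (add_edge e u v).
Proof.
move=> [esym eirr] uv; split=> [x y | x]; rewrite /add_edge.
  by rewrite esym; congr (_ || _); rewrite orbC; congr (_ || _); apply: andbC.
by rewrite eirr /=; case: (eqVneq x u) => [->|_]; rewrite ?(negbTE uv) ?andbF.
Qed.

Lemma deg_add_edge e u v z :
  simple_graph e -> u != v -> ~~ e u v ->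
  deg (add_edge e u v) z = deg e z + (z == u) + (z == v).
Proof.
move=> [esym _] uv n_uv; rewrite /deg.
case: (eqVneq z u) => [->|zu].
  have -> : [set y | add_edge e u v u y] = v |: [set y | e u y].
    by apply/setP => y; rewrite !inE /add_edge eqxx (negbTE uv) orbF orbC.
  by rewrite cardsU1 inE (negbTE n_uv) (negbTE uv) addn0 addnC.
case: (eqVneq z v) => [->|zv].
  have -> : [set y | add_edge e u v v y] = u |: [set y | e v y].
    by apply/setP => y; rewrite !inE /add_edge eqxx eq_sym (negbTE uv) /= orbC.
  by rewrite cardsU1 inE esym (negbTE n_uv) addn0 addnC.
by rewrite !addn0; apply: eq_card => y; rewrite !inE /add_edge (negbTE zu) (negbTE zv) orbF.
Qed.

Definition reach3 e v : {set T} :=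
  \bigcup_(a | e v a) \bigcup_(b | e a b) [set u | e b u].

Lemma reach3P e v u :
  reflect (exists a b, [/\ e v a, e a b & e b u]) (u \in reach3 e v).
Proof.
apply: (iffP bigcupP) => [[a va /bigcupP [b ab]]|[a [b [va ab bu]]]].
  by rewrite inE => bu; exists a, b.
by exists a => //; apply/bigcupP; exists b; rewrite ?inE.
Qed.

Lemma reach3_sym e u v : symmetric e -> (u \in reach3 e v) = (v \in reach3 e u).
Proof.
move=> esym; apply/reach3P/reach3P => -[a [b [h1 h2 h3]]];
  by exists b, a; rewrite esym h3 esym h2 esym h1.
Qed.

Lemma sum_nbr_const e v c : \sum_(a | e v a) c = deg e v * c.
Proof. by rewrite /deg -sum_nat_const; apply: eq_bigl => a; rewrite inE. Qed.

Lemma card_reach3 e v d :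
  (forall z, deg e z <= d) -> #|reach3 e v| <= deg e v * d * d.
Proof.
move=> deg_le; apply: leq_trans (leq_card_bigcup _ _) _.
rewrite -mulnA -sum_nbr_const; apply: leq_sum => a _.
apply: leq_trans (leq_card_bigcup _ _) _.
apply: (@leq_trans (\sum_(b | e a b) d)); first by apply: leq_sum => b _; apply: deg_le.
by rewrite sum_nbr_const leq_mul2r deg_le orbT.
Qed.

Definition blocked e v : {set T} := v |: reach3 e v.

Lemma card_blocked e v d :
  (forall z, deg e z <= d) -> #|blocked e v| <= 1 + deg e v * d * d.
Proof.
move=> deg_le; rewrite cardsU1; apply: leq_add; first by case: (_ \notin _).
exact: card_reach3.
Qed.

Lemma reach3_adj e u v : symmetric e -> e u v -> u \in reach3 e v.
Proof. by move=> esym uv; apply/reach3P; exists u, v; rewrite -esym uv. Qed.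

Lemma add_edge_common_nbr e u v y w :
  simple_graph e -> u != v -> u \notin reach3 e v -> y != u -> e y v ->
  add_edge e u v u w -> add_edge e u v y w -> w = v.
Proof.
move=> [esym eirr] uv u_far yu yv.
have yv' : y != v by apply: contraTneq yv => ->; rewrite eirr.
rewrite /add_edge eqxx (negbTE uv) (negbTE yu) (negbTE yv') /= !orbF.
case/orP=> [uw yw|/eqP //]; case/reach3P: u_far.
by exists y, w; rewrite -esym yv yw esym uw.
Qed.

(* A pair gaining a common neighbour through the new edge has no other one:
   a second one would close a walk of length 3 between u and v. *)
Lemma codeg_add_edge e u v x y :
  simple_graph e -> u != v -> u \notin reach3 e v -> x != y ->
  codeg (add_edge e u v) x y <= maxn (codeg e x y) 1.
Proof.
move=> e_simple uv u_far xy; have [esym _] := e_simple; rewrite /codeg.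
case: (boolP [forall w, add_edge e u v x w && add_edge e u v y w ==> e x w && e y w]).
  move/forallP=> old; apply: leq_trans (leq_maxl _ _); apply: subset_leq_card.
  by apply/subsetP => w; rewrite !inE => /(implyP (old w)).
rewrite negb_forall => /existsP [w0]; rewrite negb_imply => /andP [/andP [xw0 yw0] new].
apply: leq_trans (leq_maxr _ _); rewrite -(cards1 w0); apply: subset_leq_card.
apply/subsetP => w; rewrite !inE => /andP [xw yw]; apply/eqP.
wlog x_new : x y xy xw0 yw0 new xw yw / ~~ e x w0.
  move=> hwlog; case/nandP: (new) => [x_new|y_new]; first exact: (hwlog x y).
  by apply: (hwlog y x) => //; [rewrite eq_sym | rewrite andbC].
move: xw0; rewrite /add_edge (negbTE x_new) /=.
case/orP=> /andP [/eqP x_eq /eqP w0_eq]; subst x w0.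
  apply: (add_edge_common_nbr e_simple uv u_far _ _ xw yw); first by rewrite eq_sym.
  by move: yw0; rewrite /add_edge (eq_sym y u) (negbTE xy) (eq_sym v u) (negbTE uv) !andbF !orbF.
have vu : v != u by rewrite eq_sym.
have v_far : v \notin reach3 e u by rewrite -reach3_sym.
rewrite add_edgeC in xw; rewrite add_edgeC in yw.
apply: (add_edge_common_nbr e_simple vu v_far _ _ xw yw); first by rewrite eq_sym.
by move: yw0; rewrite /add_edge (eq_sym y v) (negbTE xy) (negbTE uv) !andbF !orbF.
Qed.

Lemma maxcodeg_add_edge e u v :
  simple_graph e -> u != v -> u \notin reach3 e v ->
  maxcodeg (add_edge e u v) <= maxn (maxcodeg e) 1.
Proof.
move=> e_simple uv u_far; apply/bigmax_leqP => -[x y] /= xy.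
apply: leq_trans (codeg_add_edge e_simple uv u_far xy) _.
have := leq_bigmax_cond (P := fun p : T * T => p.1 != p.2)
  (F := fun p => codeg e p.1 p.2) (x, y) xy.
rewrite -/(maxcodeg e) /=; lia.
Qed.

End AddEdge.

Section Deficit.

Variables (T : finType) (D : nat).
Implicit Types (e : rel T) (A : {set T}).

Definition deficit e := \sum_(z : T) (D - deg e z).

(* While all degrees are at most D + 1 this counts the vertices of degree D + 1. *)
Definition surplus e := \sum_(z : T) (deg e z - D).

Lemma sum_deg_add_edge (f : nat -> nat) e u v :
  simple_graph e -> u != v -> ~~ e u v ->
  \sum_z f (deg (add_edge e u v) z) + f (deg e u) + f (deg e v) =
  \sum_z f (deg e z) + f (deg e u).+1 + f (deg e v).+1.
Proof.
move=> e_simple uv n_uv; have vu : v != u by rewrite eq_sym.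
rewrite (bigD1 u) // (bigD1 v) //= [in RHS](bigD1 u) // [in RHS](bigD1 v) //=.
rewrite !deg_add_edge // eqxx (negbTE uv) (negbTE vu) eqxx !addn0 !addn1.
rewrite (eq_bigr (fun z => f (deg e z))) => [|z /andP [zu zv]]; first lia.
by rewrite deg_add_edge // (negbTE zu) (negbTE zv) !addn0.
Qed.

Lemma leq_deficit e z : D - deg e z <= deficit e.
Proof. by rewrite /deficit (bigD1 z) //= leq_addr. Qed.

Lemma deficit_le_card e A :
  (forall z, z \notin A -> D <= deg e z) -> deficit e <= #|A| * D.
Proof.
move=> deg_ge; rewrite /deficit (bigID (mem A)) /= [X in _ + X]big1 => [|z zA]; last first.
  by apply/eqP; rewrite subn_eq0 deg_ge.
by rewrite addn0 -sum_nat_const; apply: leq_sum => z _; apply: leq_subr.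
Qed.

Lemma card_le_surplus e A :
  (forall z, z \in A -> D < deg e z) -> #|A| <= surplus e.
Proof.
move=> deg_gt; rewrite /surplus (bigID (mem A)) /= -sum1_card.
by apply: leq_trans (leq_addr _ _); apply: leq_sum => z /deg_gt; rewrite subn_gt0.
Qed.

End Deficit.

Section Greedy.

Variables (T : finType) (e0 : rel T) (D k : nat).
Let B := 1 + D.-1 * D.+1 * D.+1.
Hypotheses (k_gt0 : 0 < k) (card_T : B * D.+1 <= #|T|).
Implicit Types (e : rel T) (u v z : T).

Definition greedy_inv e :=
  [/\ simple_graph e, subgraph_edges e0 e, forall z, deg e z <= D.+1,
      maxcodeg e <= k & surplus D e = 0 \/ surplus D e + deficit D e <= D * B].

Lemma card_blocked_bound e v : greedy_inv e -> deg e v < D -> #|blocked e v| <= B.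
Proof.
case=> _ _ deg_le _ _ dv; apply: leq_trans (card_blocked _ deg_le) _.
by rewrite leq_add2l !leq_mul2r; apply/orP; right; lia.
Qed.

Lemma greedy_inv_add_edge e u v :
  greedy_inv e -> deg e v < D -> u \notin blocked e v -> deg e u <= D ->
  (deg e u = D -> forall z, deg e z < D -> z \in blocked e v) ->
  greedy_inv (add_edge e u v) /\ deficit D (add_edge e u v) < deficit D e.
Proof.
move=> inv dv; have [e_simple sub deg_le codeg_le pot] := inv.
rewrite /blocked in_setU1 negb_or => /andP [uv u_far] du full.
have n_uv : ~~ e u v by apply: contra u_far; apply: reach3_adj; case: e_simple.
have def_eq := sum_deg_add_edge (fun d => D - d) e_simple uv n_uv.
have sur_eq := sum_deg_add_edge (fun d => d - D) e_simple uv n_uv.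
rewrite /= -/(deficit D _) -/(deficit D e) in def_eq.
rewrite /= -/(surplus D _) -/(surplus D e) in sur_eq.
have def_le : deg e u = D -> deficit D e <= D * B.
  move=> /full full_u; rewrite mulnC; apply: leq_trans (deficit_le_card _) _.
    by move=> z zA; rewrite leqNgt; apply: contra zA; apply: full_u.
  by rewrite leq_mul2r card_blocked_bound ?orbT.
split; last by lia.
split.
- exact: add_edge_simple.
- by move=> x y /sub; apply: subgraph_add_edge.
- move=> z; rewrite deg_add_edge //; have := deg_le z.
  case: (eqVneq z u) => [->|_]; first by rewrite (negbTE uv) /=; lia.
  by case: (eqVneq z v) => [->|_] /=; lia.
- by apply: leq_trans (maxcodeg_add_edge e_simple uv u_far) _; lia.
- by lia.
Qed.

Lemma greedy_step e v :
  greedy_inv e -> deg e v < D -> exists2 e', greedy_inv e' & deficit D e' < deficit D e.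
Proof.
move=> inv dv; set A := blocked e v.
case: (pickP [pred u | (deg e u < D) && (u \notin A)]) => [u /andP [du uA]|far_full].
  have [] := greedy_inv_add_edge inv dv uA (ltnW du); last by exists (add_edge e u v).
  by move=> du_eq; move: du; rewrite du_eq ltnn.
have full z : deg e z < D -> z \in A.
  by move=> dz; move: (far_full z); rewrite /= dz /= => /negbFE.
case: (pickP [pred u | (deg e u <= D) && (u \notin A)]) => [u /andP [du uA]|none].
  have [] := greedy_inv_add_edge inv dv uA du; last by exists (add_edge e u v).
  by move=> _; apply: full.
have [_ _ _ _ pot] := inv.
have sur_ge : #|~: A| <= surplus D e.
  apply: card_le_surplus => z; rewrite inE => zA; move: (none z) => /=.
  by rewrite zA andbT ltnNge => ->.
have := card_blocked_bound inv dv; have := leq_deficit D e v; have := cardsC A.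
rewrite -/A; move: card_T; rewrite /B; nia.
Qed.

Lemma greedy_complete e :
  greedy_inv e -> exists2 e', greedy_inv e' & forall z, D <= deg e' z.
Proof.
have [m] := ubnP (deficit D e); elim: m e => // m IH e lt_m inv.
case: (pickP (fun z => deg e z < D)) => [v dv|none].
  have [e' inv' lt'] := greedy_step inv dv.
  by apply: (IH e') => //; apply: leq_trans lt' _.
by exists e => // z; rewrite leqNgt none.
Qed.

End Greedy.

Theorem lemma4p2 (D n : nat) (T : finType) (e : rel T) :
  2 <= D -> 2 * D ^ 4 <= n -> #|T| = n ->
  simple_graph e -> maxdeg e <= D ->
  exists e' : rel T,
    [/\ simple_graph e', subgraph_edges e e',
        (forall v : T, deg e' v = D \/ deg e' v = D.+1) &
        maxcodeg e' <= maxn (maxcodeg e) 1].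
Proof.
move=> D_ge2 n_ge card_T e_simple maxdeg_le.
have deg_le z : deg e z <= D.
  by apply: leq_trans maxdeg_le; apply: (leq_bigmax (F := deg e)).
have size_le : (1 + D.-1 * D.+1 * D.+1) * D.+1 <= #|T|.
  by rewrite card_T; apply: leq_trans n_ge; case: (D) D_ge2 => [|[|d]] // _; nia.
have inv0 : greedy_inv e D (maxn (maxcodeg e) 1) e.
  split=> //.
  - by move=> z; apply: leqW.
  - exact: leq_maxl.
  - by left; apply: big1 => z _; apply/eqP; rewrite subn_eq0.
have [e' [e'_simple sub deg_le' codeg_le' _] deg_ge] :=
  greedy_complete (leq_maxr _ _) size_le inv0.
by exists e'; split=> // v; have := deg_le' v; have := deg_ge v; lia.
Qed.
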